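(* Let $\sigma(x)=1/(1+e^{-x})$, let $a,\beta_n,B_n,\gamma_n^*\ge1$, $K_n,L,r,n\in\mathbb{N}$, and let $f_{\mathbf{w}}$ be the network described in the context. Let $(X_1,Y_1),\dots,(X_n,Y_n)\in\mathbb{R}^d\times\mathbb{R}$ with $X_i\in[-a,a]^d$ and $|Y_i|\le\beta_n$ for $i=1,\dots,n$, and let $F_n(\mathbf{w})=\frac1n\sum_{i=1}^n|Y_i-f_{\mathbf{w}}(X_i)|^2$. Assume $K_n\gamma_n^*\ge\beta_n$, and let $\mathbf{w}$ satisfy $|w^{(L)}_{1,1,k}|\le\gamma_n^*$ for all $k$ and $|w^{(l)}_{k,i,j}|\le B_n$ for all $k,i,j$ and $l\in\{1,\dots,L-1\}$. Then there is a constant $c_{14}=c_{14}(d,L,r,a)>0$ such that $$\|\nabla_{\mathbf{w}}F_n(\mathbf{w})\|\le c_{14}\,K_n^{3/2}(\gamma_n^* )^2B_n^L.$$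
   Context: For a weight vector $\mathbf{w}$, $f_{\mathbf{w}}(x)=\sum_{j=1}^{K_n}w^{(L)}_{1,1,j}f^{(L)}_{j,1}(x)$, where for $k\in\{1,\dots,K_n\}$, $i\in\{1,\dots,r\}$: $f^{(l)}_{k,i}(x)=\sigma\big(\sum_{j=1}^rw^{(l-1)}_{k,i,j}f^{(l-1)}_{k,j}(x)+w^{(l-1)}_{k,i,0}\big)$ for $l=2,\dots,L$ and $f^{(1)}_{k,i}(x)=\sigma\big(\sum_{j=1}^dw^{(0)}_{k,i,j}x^{(j)}+w^{(0)}_{k,i,0}\big)$. The gradient is with respect to all weights; $\|\cdot\|$ is the Euclidean norm. *)

From Stdlib Require Import Reals Lra.
From Coquelicot Require Import Coquelicot.
Open Scope R_scope.

Definition sigma (x : R) : R := 1 / (1 + exp (- x)).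

(* sumR m f = f 1 + ... + f m  (1-based, empty for m = 0) *)
Fixpoint sumR (m : nat) (f : nat -> R) : R :=
  match m with
  | O => 0
  | S m' => sumR m' f + f (S m')
  end.

Definition sumR0 (m : nat) (f : nat -> R) : R := f O + sumR m f.

(* Weights: w l k i j  stands for  w^{(l)}_{k,i,j}  (1-based k,i; j = 0 is the bias).
   Inputs: x j  stands for  x^{(j)}, j = 1..d. *)
Definition weights := nat -> nat -> nat -> nat -> R.

(* layer d r w x l k i = f^{(l)}_{k,i}(x) for l >= 1 (value 0 for l = 0, unused) *)
Fixpoint layer (d r : nat) (w : weights) (x : nat -> R) (l k i : nat) : R :=
  match l with
  | O => 0
  | S O => sigma (sumR d (fun j => w O k i j * x j) + w O k i O)
  | S (S _ as l') =>
      sigma (sumR r (fun j => w l' k i j * layer d r w x l' k j) + w l' k i O)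
  end.

Definition fnet (d r K L : nat) (w : weights) (x : nat -> R) : R :=
  sumR K (fun j => w L 1%nat 1%nat j * layer d r w x L j 1%nat).

Definition emp_risk (d r K L n : nat) (X : nat -> nat -> R) (Y : nat -> R)
  (w : weights) : R :=
  (1 / INR n) * sumR n (fun i => (Y i - fnet d r K L w (X i)) ^ 2).

Definition upd (w : weights) (l k i j : nat) (t : R) : weights :=
  fun l0 k0 i0 j0 =>
    if (Nat.eqb l0 l && Nat.eqb k0 k && Nat.eqb i0 i && Nat.eqb j0 j)%bool
    then t else w l0 k0 i0 j0.

Definition partial (F : weights -> R) (w : weights) (l k i j : nat) : R :=
  Derive (fun t => F (upd w l k i j t)) (w l k i j).

Definition grad_norm (d r K L : nat) (F : weights -> R) (w : weights) : R :=
  sqrt (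
    sumR K (fun k => sumR r (fun i => sumR0 d (fun j => (partial F w O k i j) ^ 2)))
  + sumR (L - 1) (fun l => sumR K (fun k => sumR r (fun i =>
        sumR0 r (fun j => (partial F w l k i j) ^ 2))))
  + sumR K (fun j => (partial F w L 1%nat 1%nat j) ^ 2)).

From Pilot Require Import Defs.
From Stdlib Require Import Reals Lra Lia FunctionalExtensionality.
From Coquelicot Require Import Coquelicot.
Open Scope R_scope.

(* Each partial derivative of F_n is an average of 2 (f_w(X_i) - Y_i) times the
   corresponding partial derivative of f_w, and |f_w(X_i) - Y_i| <= beta + K gamma
   <= 2 K gamma. Partial derivatives of f_w are obtained by propagating tangents
   forward through the layers: as |sigma|, |sigma'| <= 1, the tangent of a neuron
   of layer l+1 is at most C_l B^l, where C_0 = d a + 1 and C_(l+1) = r (1 + C_l) + 1,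
   and a weight of the k-th subnetwork only moves that subnetwork. Hence every
   coordinate of the gradient is O(K gamma^2 B^(L-1)), and there are
   K (r (d+1) + (L-1) r (r+1) + 1) coordinates. *)

Lemma sumR_ext m f g :
  (forall j, (1 <= j <= m)%nat -> f j = g j) -> sumR m f = sumR m g.
Proof.
  induction m as [|m IH]; intros Hfg; cbn [sumR]; [reflexivity|].
  rewrite IH, Hfg; [reflexivity | lia |]. intros; apply Hfg; lia.
Qed.

Lemma sumR_eq0 m f : (forall j, (1 <= j <= m)%nat -> f j = 0) -> sumR m f = 0.
Proof.
  induction m as [|m IH]; intros Hf; cbn [sumR]; [reflexivity|].
  rewrite IH, (Hf (S m)) by (lia || (intros; apply Hf; lia)). ring.
Qed.

Lemma sumR_le_const m f b :
  (forall j, (1 <= j <= m)%nat -> f j <= b) -> sumR m f <= INR m * b.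
Proof.
  induction m as [|m IH]; intros Hf; cbn [sumR]; [simpl; lra|].
  rewrite S_INR.
  assert (sumR m f <= INR m * b) by (apply IH; intros; apply Hf; lia).
  assert (f (S m) <= b) by (apply Hf; lia).
  lra.
Qed.

Lemma sumR0_le_const m f b :
  (forall j, (j <= m)%nat -> f j <= b) -> sumR0 m f <= (INR m + 1) * b.
Proof.
  intros Hf. unfold sumR0.
  assert (sumR m f <= INR m * b) by (apply sumR_le_const; intros; apply Hf; lia).
  assert (f O <= b) by (apply Hf; lia).
  lra.
Qed.

Lemma Rabs_sumR_le m f : Rabs (sumR m f) <= sumR m (fun j => Rabs (f j)).
Proof.
  induction m as [|m IH]; cbn [sumR]; [rewrite Rabs_R0; lra|].
  eapply Rle_trans; [apply Rabs_triang | lra].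
Qed.

Lemma Rabs_sumR_le_const m f b :
  (forall j, (1 <= j <= m)%nat -> Rabs (f j) <= b) -> Rabs (sumR m f) <= INR m * b.
Proof. intros Hf. eapply Rle_trans; [apply Rabs_sumR_le | now apply sumR_le_const]. Qed.

Lemma Rabs_sumR_single m f j0 b :
  (forall j, (1 <= j <= m)%nat -> j <> j0 -> f j = 0) -> Rabs (f j0) <= b ->
  Rabs (sumR m f) <= b.
Proof.
  induction m as [|m IH]; intros Hf Hj0; cbn [sumR].
  - rewrite Rabs_R0. eapply Rle_trans; [apply Rabs_pos | exact Hj0].
  - destruct (Nat.eq_dec (S m) j0) as [<-|Hne].
    + rewrite sumR_eq0, Rplus_0_l; [exact Hj0|]. intros; apply Hf; lia.
    + rewrite (Hf (S m)), Rplus_0_r by lia. apply IH; auto. intros; apply Hf; lia.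
Qed.

(* [0 <= b] is only needed for [n = 0], where the mean is [1 / 0 * 0 = 0]. *)
Lemma Rabs_mean_le n g b :
  0 <= b -> (forall i, (1 <= i <= n)%nat -> Rabs (g i) <= b) ->
  Rabs (1 / INR n * sumR n g) <= b.
Proof.
  intros Hb Hg. destruct n as [|n].
  - cbn [sumR]. rewrite Rmult_0_r, Rabs_R0. exact Hb.
  - pose proof (lt_0_INR (S n) ltac:(lia)).
    rewrite Rabs_mult, Rabs_pos_eq by (apply Rlt_le, Rdiv_lt_0_compat; lra).
    apply Rmult_le_reg_l with (INR (S n)); [lra|].
    replace (INR (S n) * (1 / INR (S n) * Rabs (sumR (S n) g)))
      with (Rabs (sumR (S n) g)) by (field; lra).
    now apply Rabs_sumR_le_const.
Qed.

Lemma Rabs_mult_le x y a b : Rabs x <= a -> Rabs y <= b -> Rabs (x * y) <= a * b.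
Proof.
  intros. rewrite Rabs_mult. apply Rmult_le_compat; auto using Rabs_pos.
Qed.

Lemma is_derive_sumR m (g : nat -> R -> R) (dg : nat -> R) (t0 : R) :
  (forall j, (1 <= j <= m)%nat -> is_derive (g j) t0 (dg j)) ->
  is_derive (fun t => sumR m (fun j => g j t)) t0 (sumR m dg).
Proof.
  induction m as [|m IH]; intros Hg; cbn [sumR].
  - apply (is_derive_const 0 t0).
  - apply (is_derive_plus (fun t => sumR m (fun j => g j t)) (g (S m))).
    + apply IH. intros; apply Hg; lia.
    + apply Hg; lia.
Qed.

Definition dsigma (y : R) : R := exp (- y) / (1 + exp (- y)) ^ 2.

Lemma is_derive_sigma (y : R) : is_derive Defs.sigma y (dsigma y).
Proof.
  unfold Defs.sigma, dsigma. pose proof (exp_pos (- y)).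
  auto_derive; [lra | field; lra].
Qed.

Lemma Rabs_sigma_le1 y : Rabs (Defs.sigma y) <= 1.
Proof.
  unfold Defs.sigma. pose proof (exp_pos (- y)).
  rewrite Rabs_pos_eq by (apply Rlt_le, Rdiv_lt_0_compat; lra).
  apply Rmult_le_reg_r with (1 + exp (- y)); [lra|].
  unfold Rdiv. rewrite Rmult_assoc, Rinv_l; lra.
Qed.

Lemma Rabs_dsigma_le1 y : Rabs (dsigma y) <= 1.
Proof.
  unfold dsigma. pose proof (exp_pos (- y)).
  rewrite Rabs_pos_eq by (apply Rlt_le, Rdiv_lt_0_compat; nra).
  apply Rmult_le_reg_r with ((1 + exp (- y)) ^ 2); [nra|].
  unfold Rdiv. rewrite Rmult_assoc, Rinv_l; nra.
Qed.

Definition basis_weight (l0 k0 i0 j0 : nat) : weights :=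
  upd (fun _ _ _ _ => 0) l0 k0 i0 j0 1.

Lemma upd_same w l0 k0 i0 j0 : upd w l0 k0 i0 j0 (w l0 k0 i0 j0) = w.
Proof.
  unfold upd. do 4 (apply functional_extensionality; intro).
  destruct (Nat.eqb_spec x l0), (Nat.eqb_spec x0 k0), (Nat.eqb_spec x1 i0),
    (Nat.eqb_spec x2 j0); subst; reflexivity.
Qed.

Lemma is_derive_upd w l0 k0 i0 j0 (t0 : R) l k i j :
  is_derive (fun t => upd w l0 k0 i0 j0 t l k i j) t0 (basis_weight l0 k0 i0 j0 l k i j).
Proof.
  unfold basis_weight, upd.
  destruct (_ && _)%bool; [apply (is_derive_id t0) | apply (is_derive_const (w l k i j) t0)].
Qed.

Lemma Rabs_basis_weight_le1 l0 k0 i0 j0 l k i j :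
  Rabs (basis_weight l0 k0 i0 j0 l k i j) <= 1.
Proof.
  unfold basis_weight, upd.
  destruct (_ && _)%bool; [rewrite Rabs_R1 | rewrite Rabs_R0]; lra.
Qed.

Lemma basis_weight_eq0 l0 k0 i0 j0 l k i j :
  (l <> l0 \/ k <> k0 \/ i <> i0 \/ j <> j0) -> basis_weight l0 k0 i0 j0 l k i j = 0.
Proof.
  unfold basis_weight, upd. intros Hne.
  destruct (Nat.eqb_spec l l0), (Nat.eqb_spec k k0), (Nat.eqb_spec i i0),
    (Nat.eqb_spec j j0); simpl; tauto.
Qed.

Section Network.

Variables d r : nat.

Definition preact (w : weights) (x : nat -> R) (l k i : nat) : R :=
  match l with
  | O => sumR d (fun j => w O k i j * x j) + w O k i O
  | S _ => sumR r (fun j => w l k i j * layer d r w x l k j) + w l k i O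
  end.

Lemma layer_S w x l k i : layer d r w x (S l) k i = Defs.sigma (preact w x l k i).
Proof. now destruct l. Qed.

Lemma Rabs_layer_S_le1 w x l k i : Rabs (layer d r w x (S l) k i) <= 1.
Proof. rewrite layer_S. apply Rabs_sigma_le1. Qed.

(* Forward-mode tangents: [dlayer w v x l k i] is the derivative of [layer] in
   the weight direction [v] (see [is_derive_layer]), and [dpreact] is that of
   [preact] given the tangents [dprev] of the previous layer. *)
Definition dpreact (w v : weights) (x : nat -> R) (dprev : nat -> R) (l k i : nat) : R :=
  match l with
  | O => sumR d (fun j => v O k i j * x j) + v O k i O
  | S _ => sumR r (fun j => v l k i j * layer d r w x l k j + w l k i j * dprev j)
           + v l k i O
  end.

Fixpoint dlayer (w v : weights) (x : nat -> R) (l k i : nat) : R :=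
  match l with
  | O => 0
  | S l' => dpreact w v x (fun j => dlayer w v x l' k j) l' k i * dsigma (preact w x l' k i)
  end.

Definition dfnet (K L : nat) (w v : weights) (x : nat -> R) : R :=
  sumR K (fun j => v L 1%nat 1%nat j * layer d r w x L j 1%nat
                   + w L 1%nat 1%nat j * dlayer w v x L j 1%nat).

Definition drisk (K L n : nat) (X : nat -> nat -> R) (Y : nat -> R) (w v : weights) : R :=
  1 / INR n * sumR n (fun i => 2 * (fnet d r K L w (X i) - Y i) * dfnet K L w v (X i)).

Section Tangent.

Variables (W : R -> weights) (V : weights) (t0 : R).
Hypothesis is_derive_W :
  forall l k i j, is_derive (fun t => W t l k i j) t0 (V l k i j).

Lemma is_derive_weighted_sum m (y : R -> nat -> R) (dy : nat -> R) l k i :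
  (forall j, (1 <= j <= m)%nat -> is_derive (fun t => y t j) t0 (dy j)) ->
  is_derive (fun t => sumR m (fun j => W t l k i j * y t j)) t0
    (sumR m (fun j => V l k i j * y t0 j + W t0 l k i j * dy j)).
Proof.
  intros Hy. apply (is_derive_sumR m (fun j t => W t l k i j * y t j)).
  intros j Hj. apply Derive.is_derive_mult; auto.
Qed.

Lemma is_derive_layer x l k i :
  is_derive (fun t => layer d r (W t) x l k i) t0 (dlayer (W t0) V x l k i).
Proof.
  revert k i. induction l as [|l IH]; intros k i.
  - apply (is_derive_const 0 t0).
  - apply (is_derive_ext (fun t => Defs.sigma (preact (W t) x l k i))).
    { intros t. now rewrite layer_S. }
    apply (is_derive_comp Defs.sigma (fun t => preact (W t) x l k i)).
    { apply is_derive_sigma. }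
    destruct l as [|l]; apply (is_derive_plus (fun t => sumR _ _) (fun t => W t _ k i O)).
    all: try apply is_derive_W.
    + apply (is_derive_ext (fun t => sumR d (fun j => W t O k i j * x j))); [reflexivity|].
      replace (sumR d _) with (sumR d (fun j => V O k i j * x j + W t0 O k i j * 0)).
      * apply is_derive_weighted_sum. intros j _. apply (is_derive_const (x j) t0).
      * apply sumR_ext. intros j _. ring.
    + apply is_derive_weighted_sum. intros j _. apply IH.
Qed.

Lemma is_derive_fnet K L x :
  is_derive (fun t => fnet d r K L (W t) x) t0 (dfnet K L (W t0) V x).
Proof.
  apply (is_derive_weighted_sum K (fun t j => layer d r (W t) x L j 1%nat)).
  intros j _. apply is_derive_layer.
Qed.

Lemma is_derive_emp_risk K L n X Y :
  is_derive (fun t => emp_risk d r K L n X Y (W t)) t0 (drisk K L n X Y (W t0) V).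
Proof.
  unfold emp_risk, drisk. apply is_derive_scal.
  replace (sumR n _) with (sumR n (fun i => INR 2 * (0 - dfnet K L (W t0) V (X i))
                                            * (Y i - fnet d r K L (W t0) (X i)) ^ 1)).
  - apply (is_derive_sumR n (fun i t => (Y i - fnet d r K L (W t) (X i)) ^ 2)).
    intros i _. apply (is_derive_pow (fun t => Y i - fnet d r K L (W t) (X i))).
    apply (is_derive_minus (fun _ => Y i) (fun t => fnet d r K L (W t) (X i))).
    + apply (is_derive_const (Y i) t0).
    + apply is_derive_fnet.
  - apply sumR_ext. intros i _. simpl. ring.
Qed.

End Tangent.

Lemma partial_emp_risk K L n X Y w l0 k0 i0 j0 :
  partial (emp_risk d r K L n X Y) w l0 k0 i0 j0
  = drisk K L n X Y w (basis_weight l0 k0 i0 j0).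
Proof.
  apply is_derive_unique.
  pose proof (is_derive_emp_risk (upd w l0 k0 i0 j0) (basis_weight l0 k0 i0 j0)
                (w l0 k0 i0 j0) (is_derive_upd w l0 k0 i0 j0 _) K L n X Y) as H.
  now rewrite upd_same in H.
Qed.

Fixpoint tangent_const (a : R) (n : nat) : R :=
  match n with
  | O => INR d * a + 1
  | S n' => INR r * (1 + tangent_const a n') + 1
  end.

Lemma tangent_const_ge0 a n : 0 <= a -> 0 <= tangent_const a n.
Proof.
  intros Ha. pose proof (pos_INR d). pose proof (pos_INR r).
  induction n as [|n IH]; cbn [tangent_const]; nra.
Qed.

Lemma Rabs_dlayer_S_le w v x l k i :
  Rabs (dlayer w v x (S l) k i) <= Rabs (dpreact w v x (fun j => dlayer w v x l k j) l k i).
Proof.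
  cbn [dlayer]. rewrite Rabs_mult.
  pose proof (Rabs_dsigma_le1 (preact w x l k i)).
  pose proof (Rabs_pos (dpreact w v x (fun j => dlayer w v x l k j) l k i)). nra.
Qed.

Lemma dlayer_eq0 w v x l k :
  (forall l' i j, (l' < l)%nat -> v l' k i j = 0) -> forall i, dlayer w v x l k i = 0.
Proof.
  induction l as [|l IH]; intros Hv i; [reflexivity|].
  cbn [dlayer]. destruct l as [|l]; cbn [dpreact].
  - rewrite sumR_eq0, Hv by (lia || (intros j _; rewrite Hv by lia; ring)). ring.
  - rewrite sumR_eq0, Hv by (lia || (intros j _;
      rewrite Hv, IH by (lia || (intros; apply Hv; lia)); ring)).
    ring.
Qed.

Lemma Rabs_dlayer_le w v x k a B n :
  1 <= B ->
  (forall j, (1 <= j <= d)%nat -> Rabs (x j) <= a) ->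
  (forall l i j, Rabs (v l k i j) <= 1) ->
  (forall l i j, (1 <= l <= n)%nat -> (1 <= i <= r)%nat -> (1 <= j <= r)%nat ->
     Rabs (w l k i j) <= B) ->
  forall i, (1 <= i <= r)%nat -> Rabs (dlayer w v x (S n) k i) <= tangent_const a n * B ^ n.
Proof.
  intros HB Hx Hv. induction n as [|n IH]; intros Hw i Hi;
    (eapply Rle_trans; [apply Rabs_dlayer_S_le|]); cbn [dpreact tangent_const pow].
  - assert (Rabs (sumR d (fun j => v O k i j * x j)) <= INR d * a).
    { apply Rabs_sumR_le_const. intros j Hj. rewrite <- (Rmult_1_l a).
      apply Rabs_mult_le; auto. }
    pose proof (Hv O i O).
    eapply Rle_trans; [apply Rabs_triang | lra].
  - assert (Hw' : forall l i j, (1 <= l <= n)%nat -> (1 <= i <= r)%nat -> (1 <= j <= r)%nat ->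
              Rabs (w l k i j) <= B) by (intros; apply Hw; lia).
    assert (Hsum : Rabs (sumR r (fun j => v (S n) k i j * layer d r w x (S n) k j
                                          + w (S n) k i j * dlayer w v x (S n) k j))
                   <= INR r * (1 + B * (tangent_const a n * B ^ n))).
    { apply Rabs_sumR_le_const. intros j Hj.
      pose proof (Rabs_mult_le _ _ _ _ (Hv (S n) i j) (Rabs_layer_S_le1 w x n k j)).
      pose proof (Rabs_mult_le _ _ _ _ (Hw (S n) i j ltac:(lia) Hi Hj) (IH Hw' j Hj)).
      eapply Rle_trans; [apply Rabs_triang | lra]. }
    pose proof (Hv (S n) i O). pose proof (pos_INR r).
    assert (1 <= B * B ^ n) by (rewrite tech_pow_Rmult; apply pow_R1_Rle; lra).
    assert (INR r * 1 <= INR r * (B * B ^ n)) by (apply Rmult_le_compat_l; lra).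
    eapply Rle_trans; [apply Rabs_triang | lra].
Qed.

Lemma Rabs_fnet_le K L w x gamma :
  (1 <= L)%nat -> (forall k, (1 <= k <= K)%nat -> Rabs (w L 1%nat 1%nat k) <= gamma) ->
  Rabs (fnet d r K L w x) <= INR K * gamma.
Proof.
  intros HL Hw. destruct L as [|m]; [lia|].
  apply Rabs_sumR_le_const. intros k Hk. rewrite <- (Rmult_1_r gamma).
  apply Rabs_mult_le; [auto | apply Rabs_layer_S_le1].
Qed.

Lemma Rabs_dfnet_hidden_le K L w x a B gamma l0 k0 i0 j0 :
  1 <= B -> (l0 < L)%nat -> (1 <= i0 <= r)%nat ->
  (forall j, (1 <= j <= d)%nat -> Rabs (x j) <= a) ->
  (forall l i j, (1 <= l <= L - 1)%nat -> (1 <= i <= r)%nat -> (1 <= j <= r)%nat ->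
     Rabs (w l k0 i j) <= B) ->
  Rabs (w L 1%nat 1%nat k0) <= gamma ->
  Rabs (dfnet K L w (basis_weight l0 k0 i0 j0) x)
  <= gamma * (tangent_const a (L - 1) * B ^ (L - 1)).
Proof.
  intros HB Hl Hi0 Hx Hw HwL. destruct L as [|m]; [lia|].
  replace (S m - 1)%nat with m in * by lia.
  unfold dfnet. apply Rabs_sumR_single with k0.
  - intros k _ Hk. rewrite basis_weight_eq0 by lia.
    rewrite dlayer_eq0; [ring|]. intros; apply basis_weight_eq0; lia.
  - rewrite basis_weight_eq0, Rmult_0_l, Rplus_0_l by lia.
    apply Rabs_mult_le; [exact HwL|].
    apply Rabs_dlayer_le; auto using Rabs_basis_weight_le1. lia.
Qed.

Lemma Rabs_dfnet_output_le K L w x j0 :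
  (1 <= L)%nat -> Rabs (dfnet K L w (basis_weight L 1%nat 1%nat j0) x) <= 1.
Proof.
  intros HL. destruct L as [|m]; [lia|].
  assert (Hlow : forall k i, dlayer w (basis_weight (S m) 1 1 j0) x (S m) k i = 0).
  { intros k. apply dlayer_eq0. intros; apply basis_weight_eq0; lia. }
  unfold dfnet. apply Rabs_sumR_single with j0.
  - intros k _ Hk. rewrite basis_weight_eq0, Hlow by lia. ring.
  - rewrite Hlow, Rmult_0_r, Rplus_0_r.
    eapply Rle_trans;
      [apply Rabs_mult_le; [apply Rabs_basis_weight_le1 | apply Rabs_layer_S_le1] | lra].
Qed.

Lemma Rabs_drisk_le K L n X Y w v beta gamma b :
  0 <= beta -> 0 <= gamma -> 0 <= b -> (1 <= L)%nat ->
  (forall k, (1 <= k <= K)%nat -> Rabs (w L 1%nat 1%nat k) <= gamma) ->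
  (forall i, (1 <= i <= n)%nat -> Rabs (Y i) <= beta) ->
  (forall i, (1 <= i <= n)%nat -> Rabs (dfnet K L w v (X i)) <= b) ->
  Rabs (drisk K L n X Y w v) <= 2 * (beta + INR K * gamma) * b.
Proof.
  intros Hbeta Hgamma Hb HL HwL HY Hdf. pose proof (pos_INR K).
  apply Rabs_mean_le; [apply Rmult_le_pos; [nra | exact Hb]|]. intros i Hi.
  apply Rabs_mult_le; [|auto].
  rewrite Rabs_mult, (Rabs_pos_eq 2) by lra. apply Rmult_le_compat_l; [lra|].
  unfold Rminus. eapply Rle_trans; [apply Rabs_triang|].
  rewrite Rabs_Ropp. pose proof (Rabs_fnet_le K L w (X i) gamma HL HwL). pose proof (HY i Hi).
  lra.
Qed.

Lemma Rabs_partial_hidden_le K L n X Y w a B beta gamma l0 k0 i0 j0 :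
  0 <= beta -> 0 <= gamma -> 1 <= B -> 0 <= a -> (1 <= L)%nat ->
  (l0 < L)%nat -> (1 <= i0 <= r)%nat ->
  (forall i j, (1 <= i <= n)%nat -> (1 <= j <= d)%nat -> Rabs (X i j) <= a) ->
  (forall i, (1 <= i <= n)%nat -> Rabs (Y i) <= beta) ->
  (forall k, (1 <= k <= K)%nat -> Rabs (w L 1%nat 1%nat k) <= gamma) ->
  (1 <= k0 <= K)%nat ->
  (forall l i j, (1 <= l <= L - 1)%nat -> (1 <= i <= r)%nat -> (1 <= j <= r)%nat ->
     Rabs (w l k0 i j) <= B) ->
  Rabs (partial (emp_risk d r K L n X Y) w l0 k0 i0 j0)
  <= 2 * (beta + INR K * gamma) * (gamma * (tangent_const a (L - 1) * B ^ (L - 1))).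
Proof.
  intros Hbeta Hgamma HB Ha HL Hl0 Hi0 HX HY HwL Hk0 Hw.
  rewrite partial_emp_risk. apply Rabs_drisk_le; auto.
  - pose proof (tangent_const_ge0 a (L - 1) Ha).
    assert (1 <= B ^ (L - 1)) by (apply pow_R1_Rle; lra).
    apply Rmult_le_pos; [lra | nra].
  - intros i Hi. apply Rabs_dfnet_hidden_le; auto.
Qed.

Lemma Rabs_partial_output_le K L n X Y w beta gamma j0 :
  0 <= beta -> 0 <= gamma -> (1 <= L)%nat ->
  (forall i, (1 <= i <= n)%nat -> Rabs (Y i) <= beta) ->
  (forall k, (1 <= k <= K)%nat -> Rabs (w L 1%nat 1%nat k) <= gamma) ->
  Rabs (partial (emp_risk d r K L n X Y) w L 1%nat 1%nat j0) <= 2 * (beta + INR K * gamma).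
Proof.
  intros Hbeta Hgamma HL HY HwL.
  rewrite partial_emp_risk, <- (Rmult_1_r (2 * _)).
  apply Rabs_drisk_le; auto; [lra|]. intros; now apply Rabs_dfnet_output_le.
Qed.

End Network.

Definition subnet_size (d r L : nat) : R :=
  INR r * (INR d + 1) + INR (L - 1) * (INR r * (INR r + 1)) + 1.

Lemma subnet_size_ge1 d r L : 1 <= subnet_size d r L.
Proof.
  unfold subnet_size.
  pose proof (pos_INR d). pose proof (pos_INR r). pose proof (pos_INR (L - 1)).
  assert (0 <= INR r * (INR r + 1)) by nra. nra.
Qed.

Lemma grad_norm_le d r K L F w P :
  (forall l k i j, (l <= L - 1)%nat -> (1 <= k <= K)%nat -> (1 <= i <= r)%nat ->
     Rabs (partial F w l k i j) <= P) ->
  (forall j, Rabs (partial F w L 1%nat 1%nat j) <= P) ->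
  grad_norm d r K L F w <= sqrt (INR K * subnet_size d r L) * P.
Proof.
  intros Hhid Hout.
  assert (HP : 0 <= P) by (eapply Rle_trans; [apply Rabs_pos | apply (Hout O)]).
  pose proof (subnet_size_ge1 d r L). pose proof (pos_INR K).
  unfold grad_norm. rewrite <- (sqrt_pow2 P HP), <- sqrt_mult by nra.
  apply sqrt_le_1_alt.
  assert (sumR K (fun k => sumR r (fun i => sumR0 d (fun j => partial F w O k i j ^ 2)))
          <= INR K * (INR r * ((INR d + 1) * P ^ 2))).
  { apply sumR_le_const; intros k Hk. apply sumR_le_const; intros i Hi.
    apply sumR0_le_const; intros j Hj. apply pow_maj_Rabs, Hhid; lia. }
  assert (sumR (L - 1) (fun l => sumR K (fun k => sumR r (fun i =>
            sumR0 r (fun j => partial F w l k i j ^ 2))))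
          <= INR (L - 1) * (INR K * (INR r * ((INR r + 1) * P ^ 2)))).
  { apply sumR_le_const; intros l Hl. apply sumR_le_const; intros k Hk.
    apply sumR_le_const; intros i Hi. apply sumR0_le_const; intros j Hj.
    apply pow_maj_Rabs, Hhid; lia. }
  assert (sumR K (fun j => partial F w L 1%nat 1%nat j ^ 2) <= INR K * P ^ 2).
  { apply sumR_le_const; intros j Hj. apply pow_maj_Rabs, Hout. }
  unfold subnet_size. lra.
Qed.

Theorem lemma3 :
  forall (d L r : nat) (a : R),
    (1 <= L)%nat -> 1 <= a ->
    exists c14 : R, 0 < c14 /\
      forall (K n : nat) (beta B gamma : R)
             (X : nat -> nat -> R) (Y : nat -> R) (w : weights),
        1 <= beta -> 1 <= B -> 1 <= gamma ->
        (forall i j, (1 <= i <= n)%nat -> (1 <= j <= d)%nat -> Rabs (X i j) <= a) ->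
        (forall i, (1 <= i <= n)%nat -> Rabs (Y i) <= beta) ->
        INR K * gamma >= beta ->
        (forall k, (1 <= k <= K)%nat -> Rabs (w L 1%nat 1%nat k) <= gamma) ->
        (forall l k i j, (1 <= l <= L - 1)%nat -> (1 <= k <= K)%nat ->
           (1 <= i <= r)%nat -> (0 <= j <= r)%nat -> Rabs (w l k i j) <= B) ->
        grad_norm d r K L (emp_risk d r K L n X Y) w
          <= c14 * (INR K * sqrt (INR K)) * gamma ^ 2 * B ^ L.
Proof.
  intros d L r a HL Ha.
  set (C := tangent_const d r a (L - 1)).
  assert (HC : 0 <= C) by (apply tangent_const_ge0; lra).
  pose proof (sqrt_lt_R0 _ (Rlt_le_trans _ _ _ Rlt_0_1 (subnet_size_ge1 d r L))) as HS.
  exists (4 * sqrt (subnet_size d r L) * (C + 1)). split; [nra|].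
  intros K n beta B gamma X Y w Hbeta HB Hgamma HX HY HKg HwL Hw.
  assert (Hb : 1 <= B ^ (L - 1)) by (apply pow_R1_Rle; lra).
  assert (HgB : 1 <= gamma * B ^ (L - 1)) by nra.
  assert (Hrisk : 2 * (beta + INR K * gamma) <= 4 * INR K * gamma) by lra.
  pose proof (pos_INR K).
  eapply Rle_trans.
  { apply grad_norm_le with (P := 4 * INR K * gamma * (gamma * (C + 1) * B ^ (L - 1))).
    - intros l k i j Hl Hk Hi.
      eapply Rle_trans.
      { apply Rabs_partial_hidden_le with (a := a) (B := B) (beta := beta);
          auto; try lra; try lia. intros; apply Hw; lia. }
      fold C. apply Rmult_le_compat; [lra | | exact Hrisk | nra].
      apply Rmult_le_pos; [lra | apply Rmult_le_pos; lra].
    - intros j.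
      eapply Rle_trans; [apply Rabs_partial_output_le with (beta := beta); auto; lra|].
      rewrite <- (Rmult_1_r (2 * _)). apply Rmult_le_compat; [lra | lra | exact Hrisk | nra]. }
  rewrite sqrt_mult_alt by apply pos_INR.
  replace (B ^ L) with (B * B ^ (L - 1))
    by (destruct L as [|m]; [lia | now replace (S m - 1)%nat with m by lia]).
  assert (0 <= sqrt (INR K) * sqrt (subnet_size d r L)
               * (4 * INR K * gamma * (gamma * (C + 1) * B ^ (L - 1)))).
  { repeat apply Rmult_le_pos; try apply sqrt_pos; lra. }
  nra.
Qed.
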